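(* Let $K$ be an algebraically closed field, $\mathcal{T}$ a $\operatorname{Hom}$-finite Krull–Schmidt triangulated $K$-category with a Serre functor $\mathbb{S}$, and $\mathcal{I}$ a functorially finite ideal of $\mathcal{T}$. Then $\mathcal{I}$ is $\tau$-stable if and only if $\mathrm{Gh}_{\mathcal{I}}=\mathrm{CoGh}_{\mathcal{I}[1]}$.
   Context: A Serre functor is a $K$-linear autoequivalence $\mathbb{S}$ with natural isomorphisms $\operatorname{Hom}(A,B)\cong D\operatorname{Hom}(B,\mathbb{S}A)$, $D=\operatorname{Hom}_K(-,K)$; $\tau=\mathbb{S}[-1]$. An ideal: subgroups $\mathcal{I}(X,Y)\subseteq\operatorname{Hom}(X,Y)$ closed under composition; it is functorially finite if each object has a left and a right $\mathcal{I}$-approximation (a morphism of $\mathcal{I}$ starting/ending at the object through which all such morphisms of $\mathcal{I}$ factor). $\mathcal{I}$ is $\tau$-stable if $\tau\mathcal{I}=\mathcal{I}$, where $\tau\mathcal{I}=\{\tau(f):f\in\mathcal{I}\}$. $\mathcal{I}[1]=\{f[1]:f\in\mathcal{I}\}$. With composition $gf$ meaning $f$ first: $\mathrm{Gh}_{\mathcal{I}}=\{f: fi=0\ \forall\text{ composable } i\in\mathcal{I}\}$, $\mathrm{CoGh}_{\mathcal{I}}=\{f: if=0\ \forall\text{ composable } i\in\mathcal{I}\}$. *)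

From HB Require Import structures.
From mathcomp Require Import all_boot all_order all_algebra.
Set Implicit Arguments. Unset Strict Implicit. Unset Printing Implicit Defensive.
Import GRing.Theory.
Local Open Scope ring_scope.

(* K-linear categories.  Hom-spaces are finite-dimensional K-vector spaces    *)
(* (vectType K), so every such category is Hom-finite.                        *)
Record KCat (K : fieldType) := KCatMk {
  Ob : Type;
  Hom : Ob -> Ob -> vectType K;
  comp : forall X Y Z : Ob, Hom Y Z -> Hom X Y -> Hom X Z;
  idm : forall X : Ob, Hom X X;
  compA : forall X Y Z W (h : Hom Z W) (g : Hom Y Z) (f : Hom X Y),
      comp h (comp g f) = comp (comp h g) f;
  comp1m : forall X Y (f : Hom X Y), comp (idm Y) f = f;
  compm1 : forall X Y (f : Hom X Y), comp f (idm X) = f;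
  comp_linr : forall X Y Z (g : Hom Y Z) (a : K) (f1 f2 : Hom X Y),
      comp g (a *: f1 + f2) = a *: comp g f1 + comp g f2;
  comp_linl : forall X Y Z (f : Hom X Y) (a : K) (g1 g2 : Hom Y Z),
      comp (a *: g1 + g2) f = a *: comp g1 f + comp g2 f
}.
Arguments Hom {K} C X Y : rename.
Arguments comp {K C X Y Z} g f : rename.
Arguments idm {K C} X : rename.

Section KCatTheory.
Variables (K : fieldType) (C : KCat K).
Local Notation Ob := (Ob C).
Local Notation Hom := (Hom C).

Definition is_iso (X Y : Ob) (f : Hom X Y) : Prop :=
  exists g : Hom Y X, comp g f = idm X /\ comp f g = idm Y.

Definition isomorphic (X Y : Ob) : Prop := exists f : Hom X Y, is_iso f.

(* iota and projections pi.  For n = 0 this says S is a zero object.         *)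
Definition is_biprod (n : nat) (Xs : 'I_n -> Ob) (S : Ob)
    (iota : forall k, Hom (Xs k) S) (pi : forall k, Hom S (Xs k)) : Prop :=
  (forall k, comp (pi k) (iota k) = idm (Xs k)) /\
  (forall k l, k != l -> comp (pi l) (iota k) = 0) /\
  (\sum_(k < n) comp (iota k) (pi k) = idm S).

(* Z is a zero object (End Z = 0, equivalently Hom(Z,-) = 0 = Hom(-,Z)). *)
Definition is_zero_obj (Z : Ob) : Prop := idm Z = 0.

Definition additive_cat : Prop :=
  forall (n : nat) (Xs : 'I_n -> Ob), exists S iota pi, @is_biprod n Xs S iota pi.

Definition local_obj (X : Ob) : Prop :=
  idm X <> 0 /\ forall f : Hom X X, is_iso f \/ is_iso (idm X - f).

Definition krull_schmidt : Prop :=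
  forall X : Ob, exists (n : nat) (Xs : 'I_n -> Ob) (S : Ob) iota pi,
    @is_biprod n Xs S iota pi /\ isomorphic S X /\ (forall k, local_obj (Xs k)).

Record kfunctor := KFunctor {
  fobj :> Ob -> Ob;
  fmap : forall X Y, Hom X Y -> Hom (fobj X) (fobj Y);
  fmap_id : forall X, fmap (idm X) = idm (fobj X);
  fmap_comp : forall X Y Z (g : Hom Y Z) (f : Hom X Y),
      fmap (comp g f) = comp (fmap g) (fmap f);
  fmap_lin : forall X Y (a : K) (f1 f2 : Hom X Y),
      fmap (a *: f1 + f2) = a *: fmap f1 + fmap f2
}.

Definition id_functor : kfunctor.
Proof.
refine (@KFunctor (fun X => X) (fun X Y f => f) _ _ _); by [].
Defined.

Definition comp_functor (F G : kfunctor) : kfunctor.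
Proof.
refine (@KFunctor (fun X => F (G X)) (fun X Y f => fmap F (fmap G f)) _ _ _).
- by move=> X; rewrite !fmap_id.
- by move=> X Y Z g f; rewrite !fmap_comp.
- by move=> X Y a f1 f2; rewrite !fmap_lin.
Defined.

Definition nat_iso (F G : kfunctor) : Prop :=
  exists alpha : forall X, Hom (F X) (G X),
    (forall X, is_iso (alpha X)) /\
    (forall X Y (f : Hom X Y), comp (fmap G f) (alpha X) = comp (alpha Y) (fmap F f)).

Definition fully_faithful (F : kfunctor) : Prop :=
  forall X Y, bijective (@fmap F X Y).

Definition dense (F : kfunctor) : Prop :=
  forall Y : Ob, exists X : Ob, isomorphic (F X) Y.

Definition autoequivalence (F : kfunctor) : Prop :=
  fully_faithful F /\ dense F.

Record triangle (Sh : kfunctor) := Tri {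
  tX : Ob; tY : Ob; tZ : Ob;
  tu : Hom tX tY; tv : Hom tY tZ; tw : Hom tZ (Sh tX)
}.

Definition tri_iso (Sh : kfunctor) (T T' : triangle Sh) : Prop :=
  exists (a : Hom (tX T) (tX T')) (b : Hom (tY T) (tY T')) (c : Hom (tZ T) (tZ T')),
    [/\ is_iso a, is_iso b, is_iso c &
        [/\ comp b (tu T) = comp (tu T') a,
             comp c (tv T) = comp (tv T') b &
             comp (fmap Sh a) (tw T) = comp (tw T') c]].

Record triangulated := Triangulated {
  shift : kfunctor;
  unshift : kfunctor;
  shift_unshift : nat_iso (comp_functor shift unshift) id_functor;
  unshift_shift : nat_iso (comp_functor unshift shift) id_functor;
  dist : triangle shift -> Prop;
  TR1_iso : forall T T', tri_iso T T' -> dist T -> dist T';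
  TR1_id : forall X : Ob, exists (Z : Ob) (v : Hom X Z) (w : Hom Z (shift X)),
      is_zero_obj Z /\
      dist (@Tri shift X X Z (idm X) v w);
  TR1_ext : forall X Y (u : Hom X Y), exists Z (v : Hom Y Z) (w : Hom Z (shift X)),
      dist (Tri u v w);
  TR2 : forall X Y Z (u : Hom X Y) (v : Hom Y Z) (w : Hom Z (shift X)),
      dist (Tri u v w) <-> dist (Tri v w (- fmap shift u));
  TR3 : forall T T' (a : Hom (tX T) (tX T')) (b : Hom (tY T) (tY T')),
      dist T -> dist T' -> comp b (tu T) = comp (tu T') a ->
      exists c : Hom (tZ T) (tZ T'),
        comp c (tv T) = comp (tv T') b /\ comp (fmap shift a) (tw T) = comp (tw T') c;
  TR4 : forall X Y Z Z' X' Y' (u : Hom X Y) (v : Hom Y Z)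
      (j : Hom Y Z') (k : Hom Z' (shift X))
      (l : Hom Z X') (i : Hom X' (shift Y))
      (m : Hom Z Y') (n : Hom Y' (shift X)),
      dist (Tri u j k) -> dist (Tri v l i) -> dist (Tri (comp v u) m n) ->
      exists (f : Hom Z' Y') (g : Hom Y' X'),
        [/\ dist (Tri f g (comp (fmap shift j) i)),
            comp m v = comp f j, k = comp n f, comp g m = l &
            comp i g = comp (fmap shift u) n]
}.

Definition serre_functor (S : kfunctor) : Prop :=
  autoequivalence S /\
  exists eta : forall A B : Ob, 'Hom(Hom A B, 'Hom(Hom B (S A), K^o)),
    (forall A B, bijective (eta A B)) /\
    (forall A A' B B' (a : Hom A' A) (b : Hom B B') (f : Hom A B) (g : Hom B' (S A')),
        eta A' B' (comp b (comp f a)) g = eta A B f (comp (fmap S a) (comp g b))).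

Definition ideal_of := forall X Y : Ob, Hom X Y -> Prop.

Definition is_ideal (I : ideal_of) : Prop :=
  (forall X Y, I X Y 0) /\
  (forall X Y (f g : Hom X Y), I X Y f -> I X Y g -> I X Y (f - g)) /\
  (forall X Y Z W (a : Hom Y Z) (f : Hom X Y) (b : Hom W X),
      I X Y f -> I W Z (comp a (comp f b))).

Definition right_approx (I : ideal_of) (X : Ob) : Prop :=
  exists (Y : Ob) (r : Hom Y X), I Y X r /\
    forall Z (i : Hom Z X), I Z X i -> exists h : Hom Z Y, i = comp r h.

Definition left_approx (I : ideal_of) (X : Ob) : Prop :=
  exists (Y : Ob) (l : Hom X Y), I X Y l /\
    forall Z (i : Hom X Z), I X Z i -> exists h : Hom Y Z, i = comp h l.

Definition functorially_finite (I : ideal_of) : Prop :=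
  forall X : Ob, left_approx I X /\ right_approx I X.

(* F I := the ideal {F f : f in I}, i.e. the ideal generated by the
   morphisms F f, f in I (closing under composition on both sides; sums are
   then automatic in an additive category). *)
Definition image_ideal (F : kfunctor) (I : ideal_of) : ideal_of :=
  fun X Y g => exists (X' Y' : Ob) (f : Hom X' Y') (a : Hom (F Y') Y) (b : Hom X (F X')),
    I X' Y' f /\ g = comp a (comp (fmap F f) b).

Definition Gh (I : ideal_of) : ideal_of :=
  fun Y Z f => forall X (i : Hom X Y), I X Y i -> comp f i = 0.

Definition CoGh (I : ideal_of) : ideal_of :=
  fun X Y f => forall Z (i : Hom Y Z), I Y Z i -> comp i f = 0.

Definition same_ideal (I J : ideal_of) : Prop :=
  forall X Y (f : Hom X Y), I X Y f <-> J X Y f.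

End KCatTheory.

Definition tau_functor (K : fieldType) (C : KCat K) (T : triangulated C)
    (S : kfunctor C) : kfunctor C :=
  comp_functor S (unshift T).

Definition tau_stable (K : fieldType) (C : KCat K) (T : triangulated C)
    (S : kfunctor C) (I : ideal_of C) : Prop :=
  same_ideal (image_ideal (tau_functor T S) I) I.

Definition shift_ideal (K : fieldType) (C : KCat K) (T : triangulated C)
    (I : ideal_of C) : ideal_of C :=
  image_ideal (shift T) I.

From Pilot Require Import Defs.
From mathcomp Require Import all_boot all_order all_algebra.
From Corelib Require Import Setoid.
Set Implicit Arguments. Unset Strict Implicit. Unset Printing Implicit Defensive.
Import GRing.Theory.
Local Open Scope ring_scope.

(* Write ⊥J for the morphisms f : A -> B with eta(f, k) = 0 for every k in
   J(B, S A), eta being the Serre pairing.  Since S is dense and eta is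
   nondegenerate, CoGh_J = ⊥J; transporting along the equivalence [1] then
   shows that f lies in CoGh_{I[1]} iff f[-1] lies in ⊥I, and in Gh_I iff f[-1]
   lies in ⊥(tau I).  So Gh_I = CoGh_{I[1]} iff ⊥(tau I) = ⊥I.  Moreover an
   ideal J with right approximations is recovered from ⊥J: if k : U -> S A is
   orthogonal to ⊥J, nondegeneracy shows that the cone of a right
   J-approximation of S A kills k, so k factors through the approximation.
   Both I and tau I have right approximations, hence ⊥(tau I) = ⊥I forces
   tau I = I. *)

(* Without these, [comp] and [compA] resolve to function composition (ssrfun). *)
Local Notation comp := Defs.comp.
Local Notation compA := Defs.compA.

Lemma linear_fun0 (K : fieldType) (U V : lmodType K) (f : U -> V) :
  linear f -> f 0 = 0.
Proof. by move=> /zmod_morphism_linear fB; rewrite -[0 in LHS]subr0 fB subrr. Qed.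

Lemma linear_funN (K : fieldType) (U V : lmodType K) (f : U -> V) (x : U) :
  linear f -> f (- x) = - f x.
Proof.
move=> f_lin; have fB := zmod_morphism_linear f_lin.
by rewrite -sub0r fB linear_fun0 // sub0r.
Qed.

Lemma dual_separates (K : fieldType) (V : vectType K) (v : V) :
  (forall phi : 'Hom(V, K^o), phi v = 0) -> v = 0.
Proof.
move=> phi_v0; rewrite (coord_vbasis (memvf v)) big1 // => i _.
have := phi_v0 (@linfun K _ K^o (coord (vbasis fullv) i)).
by rewrite lfunE /= => ->; rewrite scale0r.
Qed.

Section Category.
Variables (K : fieldType) (C : KCat K).
Local Notation Hom := (Defs.Hom C).
Implicit Types (X Y Z W : Ob C) (F G H : kfunctor C).

Lemma comp0m X Y Z (f : Hom X Y) : comp (0 : Hom Y Z) f = 0.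
Proof. exact: (@linear_fun0 _ _ _ (comp^~ f) (comp_linl f)). Qed.

Lemma compm0 X Y Z (g : Hom Y Z) : comp g (0 : Hom X Y) = 0.
Proof. exact: linear_fun0 (comp_linr g). Qed.

Lemma compNm X Y Z (f : Hom X Y) (g : Hom Y Z) : comp (- g) f = - comp g f.
Proof. exact: (@linear_funN _ _ _ (comp^~ f) _ (comp_linl f)). Qed.

Lemma compmN X Y Z (g : Hom Y Z) (f : Hom X Y) : comp g (- f) = - comp g f.
Proof. exact: linear_funN (comp_linr g). Qed.

Lemma fmap0 F X Y : fmap F (0 : Hom X Y) = 0.
Proof. exact: linear_fun0 (@fmap_lin _ _ F X Y). Qed.

Lemma iso_cancelr X Y Z (a : Hom X Y) (f g : Hom Y Z) :
  is_iso a -> comp f a = comp g a -> f = g.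
Proof.
case=> b [_ ab] fa_ga.
by rewrite -(compm1 f) -ab compA fa_ga -compA ab compm1.
Qed.

Lemma iso_cancell X Y Z (a : Hom Y Z) (f g : Hom X Y) :
  is_iso a -> comp a f = comp a g -> f = g.
Proof.
case=> b [ba _] af_ag.
by rewrite -(comp1m f) -ba -compA af_ag compA ba comp1m.
Qed.

Lemma fmap_iso F X Y (a : Hom X Y) : is_iso a -> is_iso (fmap F a).
Proof.
by case=> b [ba ab]; exists (fmap F b); rewrite -!fmap_comp ba ab !fmap_id.
Qed.

Lemma iso_comp X Y Z (a : Hom X Y) (b : Hom Y Z) :
  is_iso a -> is_iso b -> is_iso (comp b a).
Proof.
case=> a' [a'a aa'] [b' [b'b bb']]; exists (comp a' b'); split.
  by rewrite -compA (compA b') b'b comp1m.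
by rewrite -compA (compA a) aa' comp1m.
Qed.

Lemma zero_obj_out Z W (f : Hom Z W) : is_zero_obj Z -> f = 0.
Proof. by rewrite /is_zero_obj => Z0; rewrite -(compm1 f) Z0 compm0. Qed.

Definition faithful_functor F : Prop :=
  forall X Y (f g : Hom X Y), fmap F f = fmap F g -> f = g.

Definition full_functor F : Prop :=
  forall X Y (g : Hom (F X) (F Y)), exists f, fmap F f = g.

Lemma faithful_functor_eq0 F X Y (f : Hom X Y) :
  faithful_functor F -> fmap F f = 0 -> f = 0.
Proof. by move=> F_faithful; rewrite -(fmap0 F X Y) => /F_faithful. Qed.

Lemma full_fully_faithful F : fully_faithful F -> full_functor F.
Proof. by move=> F_ff X Y g; case: (F_ff X Y) => inv _ invK; exists (inv g). Qed.

Lemma full_comp F G :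
  full_functor F -> full_functor G -> full_functor (comp_functor F G).
Proof.
move=> F_full G_full X Y g.
have [g1 <-] := F_full _ _ g; have [f <-] := G_full _ _ g1.
by exists f.
Qed.

Lemma dense_comp F G : dense F -> dense G -> dense (comp_functor F G).
Proof.
move=> F_dense G_dense Z.
have [Y [e e_iso]] := F_dense Z; have [X [d d_iso]] := G_dense Y.
by exists X, (comp e (fmap F d)); apply: iso_comp => //; apply: fmap_iso.
Qed.

Section Counit.
Variables F G : kfunctor C.
Hypothesis FG_id : nat_iso (comp_functor F G) (id_functor C).

Lemma nat_iso_id_faithful : faithful_functor G.
Proof.
case: FG_id => eps [eps_iso eps_nat] X Y f g Gf_Gg.
by apply: (iso_cancelr (eps_iso X)); rewrite !eps_nat /= Gf_Gg.
Qed.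

Lemma nat_iso_id_full : faithful_functor F -> full_functor G.
Proof.
case: FG_id => eps [eps_iso eps_nat] F_faithful X Y g.
have [e' [e'e ee']] := eps_iso X.
exists (comp (eps Y) (comp (fmap F g) e')); apply: F_faithful.
apply: (iso_cancell (eps_iso Y)); rewrite -[RHS]compm1 -e'e.
by rewrite -eps_nat /= !compA.
Qed.

Lemma nat_iso_id_dense : dense F.
Proof.
by case: FG_id => eps [eps_iso _] X; exists (G X), (eps X); apply: eps_iso.
Qed.

End Counit.

Definition comp_closed (J : ideal_of C) : Prop :=
  forall X Y Z W (a : Hom Y Z) (f : Hom X Y) (b : Hom W X),
    J X Y f -> J W Z (comp a (comp f b)).

Lemma image_ideal_comp_closed F J : comp_closed (image_ideal F J).
Proof.
move=> X Y Z W a' _ b' [X0 [Y0 [h [a [b [Jh ->]]]]]].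
exists X0, Y0, h, (comp a' a), (comp b b'); split=> //.
by rewrite !compA.
Qed.

Section CompClosed.
Variable J : ideal_of C.
Hypothesis J_comp : comp_closed J.

Lemma comp_closedl X Y Z (a : Hom Y Z) (f : Hom X Y) : J f -> J (comp a f).
Proof. by move/(J_comp a (idm X)); rewrite compm1. Qed.

Lemma comp_closedr X Y W (f : Hom X Y) (b : Hom W X) : J f -> J (comp f b).
Proof. by move/(J_comp (idm Y) b); rewrite comp1m. Qed.

Lemma comp_closed_isol X Y Z (e : Hom Y Z) (f : Hom X Y) :
  is_iso e -> J (comp e f) <-> J f.
Proof.
case=> e' [e'e _]; split; last exact: comp_closedl.
by move/(comp_closedl e'); rewrite compA e'e comp1m.
Qed.

Lemma comp_closed_nat_iso_id H X Y (f : Hom X Y) :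
  nat_iso H (id_functor C) -> J f <-> J (fmap H f).
Proof.
case=> eps [eps_iso eps_nat].
have [eX' [eX'eX eXeX']] := eps_iso X; have [eY' [eY'eY eYeY']] := eps_iso Y.
have nat_f : comp f (eps X) = comp (eps Y) (fmap H f) := eps_nat X Y f.
split=> Jf.
  have -> : fmap H f = comp eY' (comp f (eps X)).
    by rewrite nat_f compA eY'eY comp1m.
  exact: J_comp.
have -> : f = comp (eps Y) (comp (fmap H f) eX').
  by rewrite compA -nat_f -compA eXeX' compm1.
exact: J_comp.
Qed.

Lemma right_approx_iso X X' :
  right_approx J X -> isomorphic X X' -> right_approx J X'.
Proof.
move=> [R [r [Jr r_fact]]] [e [e' [e'e ee']]].
exists R, (comp e r); split; first exact: comp_closedl.
move=> Z i Ji; have [h e'i_rh] := r_fact Z _ (comp_closedl e' Ji).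
by exists h; rewrite -compA -e'i_rh compA ee' comp1m.
Qed.

Lemma image_ideal_right_approx F X :
  full_functor F -> right_approx J X -> right_approx (image_ideal F J) (F X).
Proof.
move=> F_full [R [r [Jr r_fact]]]; exists (F R), (fmap F r); split.
  by exists R, X, r, (idm (F X)), (idm (F R)); rewrite compm1 comp1m.
move=> Z _ [X0 [Y0 [h [a [b [Jh ->]]]]]].
have [a0 <-] := F_full _ _ a; have [m ahm] := r_fact _ _ (comp_closedl a0 Jh).
by exists (comp (fmap F m) b); rewrite !compA -!fmap_comp ahm.
Qed.

End CompClosed.

Lemma image_ideal_right_finite F J :
  comp_closed J -> full_functor F -> dense F ->
  (forall X, right_approx J X) -> forall X, right_approx (image_ideal F J) X.
Proof.
move=> J_comp F_full F_dense J_right X; have [X0 FX0_X] := F_dense X.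
apply: right_approx_iso FX0_X; first exact: image_ideal_comp_closed.
exact: image_ideal_right_approx.
Qed.

End Category.

Section Triangulated.
Variables (K : fieldType) (C : KCat K) (T : triangulated C).
Local Notation Hom := (Defs.Hom C).
Local Notation sh := (shift T).
Local Notation un := (unshift T).

Lemma shift_faithful : faithful_functor sh.
Proof. exact: nat_iso_id_faithful (unshift_shift T). Qed.

Lemma unshift_faithful : faithful_functor un.
Proof. exact: nat_iso_id_faithful (shift_unshift T). Qed.

Lemma shift_full : full_functor sh.
Proof. exact: nat_iso_id_full (unshift_shift T) unshift_faithful. Qed.

Lemma unshift_full : full_functor un.
Proof. exact: nat_iso_id_full (shift_unshift T) shift_faithful. Qed.

Lemma unshift_dense : dense un.
Proof. exact: nat_iso_id_dense (unshift_shift T). Qed.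

Lemma dist_comp0 X Y Z (u : Hom X Y) (v : Hom Y Z) (w : Hom Z (sh X)) :
  dist (Tri u v w) -> comp v u = 0.
Proof.
move=> uvw.
have [Z0 [v0 [w0 [Z0_0 id_tri]]]] := TR1_id T X.
have [c [/= <- _]] :=
  @TR3 _ _ T (Tri (idm X) v0 w0) (Tri u v w) (idm X) u id_tri uvw erefl.
by rewrite (zero_obj_out c Z0_0) comp0m.
Qed.

Lemma dist_weak_kernel X Y Z (u : Hom X Y) (v : Hom Y Z) (w : Hom Z (sh X))
    W (m : Hom W Y) :
  dist (Tri u v w) -> comp v m = 0 -> exists n, m = comp u n.
Proof.
move=> uvw vm0.
have [Z0 [v0 [w0 [_ id_tri]]]] := TR1_id T W.
have v0_0 : comp (0 : Hom Z0 Z) v0 = comp v m by rewrite comp0m vm0.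
have [c [_ /=]] := @TR3 _ _ T (Tri v0 w0 _) (Tri v w _) m 0
  ((TR2 _ _ _).1 id_tri) ((TR2 _ _ _).1 uvw) v0_0.
rewrite fmap_id compmN compm1 compNm => /oppr_inj shm.
have [n shn] := shift_full c; exists n.
by apply: shift_faithful; rewrite fmap_comp shn shm.
Qed.

Lemma CoGh_shift_ideal J Y Z (f : Hom Y Z) :
  comp_closed J -> CoGh (shift_ideal T J) f <-> CoGh J (fmap un f).
Proof.
move=> J_comp.
split=> [f_coghost W k Jk | unf_coghost W _ [X0 [Y0 [h [a [b [Jh ->]]]]]]].
  apply: (faithful_functor_eq0 shift_faithful); rewrite fmap_comp.
  have [beta [beta_iso beta_nat]] := shift_unshift T.
  have [bZ' [bZ'bZ _]] := beta_iso Z.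
  have nat_f : comp f (beta Y) = comp (beta Z) (fmap sh (fmap un f)) := beta_nat Y Z f.
  have -> : fmap sh (fmap un f) = comp bZ' (comp f (beta Y)).
    by rewrite nat_f compA bZ'bZ comp1m.
  rewrite !compA f_coghost ?comp0m //.
  by exists (un Z), W, k, (idm _), bZ'; rewrite comp1m.
rewrite -!compA; suff -> : comp (fmap sh h) (comp b f) = 0 by rewrite compm0.
have [alpha [alpha_iso alpha_nat]] := unshift_shift T.
apply: (faithful_functor_eq0 unshift_faithful); apply: (iso_cancell (alpha_iso Y0)).
have nat_h : comp h (alpha X0) = comp (alpha Y0) (fmap un (fmap sh h)) :=
  alpha_nat X0 Y0 h.
rewrite compm0 !fmap_comp !compA -nat_h.
by apply: unf_coghost; do 2 apply: (comp_closedr J_comp).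
Qed.

Lemma same_ideal_unshift J1 J2 :
  comp_closed J1 -> comp_closed J2 ->
  same_ideal J1 J2 <->
  forall Y Z (f : Hom Y Z), J1 _ _ (fmap un f) <-> J2 _ _ (fmap un f).
Proof.
move=> J1_comp J2_comp; split=> [J12 Y Z f | J12 X Y f]; first exact: J12.
have unsh := unshift_shift T.
rewrite (comp_closed_nat_iso_id J1_comp f unsh) (comp_closed_nat_iso_id J2_comp f unsh).
exact: J12.
Qed.

End Triangulated.

Section Serre.
Variables (K : fieldType) (C : KCat K) (S : kfunctor C).
Local Notation Hom := (Defs.Hom C).
Variable eta : forall A B : Ob C, 'Hom(Hom A B, 'Hom(Hom B (S A), K^o)).
Hypothesis eta_bij : forall A B, bijective (eta A B).
Hypothesis eta_nat : forall A A' B B' (a : Hom A' A) (b : Hom B B') (f : Hom A B)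
  (g : Hom B' (S A')),
  eta A' B' (comp b (comp f a)) g = eta A B f (comp (fmap S a) (comp g b)).

Lemma serre_natl A A' B (a : Hom A' A) (f : Hom A B) (g : Hom B (S A')) :
  eta A' B (comp f a) g = eta A B f (comp (fmap S a) g).
Proof. by have := eta_nat a (idm B) f g; rewrite !comp1m compm1. Qed.

Lemma serre_natr A B B' (b : Hom B B') (f : Hom A B) (g : Hom B' (S A)) :
  eta A B' (comp b f) g = eta A B f (comp g b).
Proof. by have := eta_nat (idm A) b f g; rewrite compm1 fmap_id comp1m. Qed.

Lemma serre_eq0l A B (f : Hom A B) : (forall g, eta A B f g = 0) -> f = 0.
Proof.
move=> etaf0; apply: (bij_inj (eta_bij A B)); rewrite linear0.
by apply/lfunP => g; rewrite zero_lfunE etaf0.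
Qed.

Lemma serre_eq0r A B (g : Hom B (S A)) : (forall f, eta A B f g = 0) -> g = 0.
Proof.
move=> eta_g0; apply: dual_separates => phi.
by have [inv _ invK] := eta_bij A B; rewrite -[phi]invK eta_g0.
Qed.

Definition serre_lperp (J : ideal_of C) : ideal_of C :=
  fun A B f => forall k : Hom B (S A), J B (S A) k -> eta A B f k = 0.

Lemma serre_lperp_comp_closed J : comp_closed J -> comp_closed (serre_lperp J).
Proof.
move=> J_comp A B B' A' b f a f_perp k Jk.
by rewrite eta_nat f_perp //; apply: J_comp.
Qed.

Hypothesis S_dense : dense S.

Lemma CoGh_serre_lperp J : comp_closed J -> same_ideal (CoGh J) (serre_lperp J).
Proof.
move=> J_comp A B f; split=> [f_coghost k Jk | f_perp W k Jk].
  by rewrite -[f]compm1 serre_natr f_coghost // linear0.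
have [A' [e [e' [e'e ee']]]] := S_dense W.
rewrite -[k]comp1m -ee' -!compA; suff -> : comp e' (comp k f) = 0 by rewrite compm0.
apply: serre_eq0r => g; rewrite -[g]comp1m serre_natl !compA -serre_natr compm1.
by rewrite f_perp //; apply: (comp_closedl J_comp).
Qed.

Hypothesis S_full : full_functor S.
Variable T : triangulated C.
Local Notation un := (unshift T).
Local Notation tau := (tau_functor T S).

Lemma serre_biperp_factor A X0 U (rho : Hom X0 (S A)) (k : Hom U (S A)) :
  (forall f : Hom A U,
     (forall m, eta A U f (comp rho m) = 0) -> eta A U f k = 0) ->
  exists m, k = comp rho m.
Proof.
move=> k_biperp; have [Z [v [w rho_tri]]] := TR1_ext T rho.
apply: (dist_weak_kernel rho_tri); have v_rho := dist_comp0 rho_tri.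
have [B [e [e' [e'e ee']]]] := S_dense Z; have [v' Sv'] := S_full (comp e' v).
rewrite -[comp v k]comp1m -ee' -compA.
suff -> : comp e' (comp v k) = 0 by rewrite compm0.
apply: serre_eq0r => f; rewrite compA -Sv' -serre_natl; apply: k_biperp => m.
by rewrite serre_natl compA Sv' -(compA e') v_rho compm0 comp0m linear0.
Qed.

Lemma serre_biperp_right_approx J A U (k : Hom U (S A)) :
  comp_closed J -> right_approx J (S A) ->
  J U (S A) k <-> (forall f : Hom A U, serre_lperp J f -> eta A U f k = 0).
Proof.
move=> J_comp [R [r [Jr r_fact]]].
split=> [Jk f f_perp | k_biperp]; first exact: f_perp.
have [m ->] : exists m, k = comp r m.
  apply: serre_biperp_factor => f f_perp_r; apply: k_biperp => k' Jk'.
  by have [m ->] := r_fact _ _ Jk'; apply: f_perp_r.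
exact: (comp_closedr J_comp).
Qed.

Lemma serre_lperp_inj J1 J2 :
  comp_closed J1 -> comp_closed J2 ->
  (forall X, right_approx J1 X) -> (forall X, right_approx J2 X) ->
  same_ideal (serre_lperp J1) (serre_lperp J2) -> same_ideal J1 J2.
Proof.
move=> J1_comp J2_comp J1_right J2_right J12_perp U W k.
have [A [e [e' [e'e ee']]]] := S_dense W.
have e'_iso : is_iso e' by exists e.
rewrite -(comp_closed_isol J1_comp _ e'_iso) -(comp_closed_isol J2_comp _ e'_iso).
rewrite !serre_biperp_right_approx //.
by split=> k_biperp f /J12_perp; apply: k_biperp.
Qed.

Lemma tau_full : full_functor tau.
Proof. by rewrite /tau_functor; apply: full_comp S_full (unshift_full (T:=T)). Qed.

Lemma tau_dense : dense tau.
Proof. by rewrite /tau_functor; apply: dense_comp S_dense (unshift_dense T). Qed.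

Lemma Gh_serre_lperp_tau I Y Z (f : Hom Y Z) :
  comp_closed I -> Gh I f <-> serre_lperp (image_ideal tau I) (fmap un f).
Proof.
move=> I_comp; split=> [f_ghost _ [X0 [Y0 [h [a [b [Ih ->]]]]]] | f_perp X i Ii].
  have [a0 <-] := tau_full a; rewrite /= compA -!fmap_comp -serre_natl -!fmap_comp.
  by rewrite f_ghost ?fmap0 ?linear0 ?zero_lfunE //; apply: (comp_closedl I_comp).
apply: (faithful_functor_eq0 (unshift_faithful (T:=T))); rewrite fmap_comp.
apply: serre_eq0l => g; rewrite serre_natl; apply: f_perp.
by exists X, Y, i, (idm _), g; rewrite comp1m.
Qed.

Lemma Gh_CoGh_serre_lperp I :
  comp_closed I ->
  same_ideal (Gh I) (CoGh (shift_ideal T I)) <->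
  same_ideal (serre_lperp (image_ideal tau I)) (serre_lperp I).
Proof.
move=> I_comp.
have tauI_comp : comp_closed (image_ideal tau I) := @image_ideal_comp_closed _ _ tau I.
rewrite (same_ideal_unshift T (serre_lperp_comp_closed tauI_comp)
                              (serre_lperp_comp_closed I_comp)).
split=> eqGh Y Z f; move: (eqGh Y Z f);
  by rewrite Gh_serre_lperp_tau // CoGh_shift_ideal // CoGh_serre_lperp.
Qed.

Lemma tau_stable_serre_lperp I :
  comp_closed I -> (forall X, right_approx I X) ->
  tau_stable T S I <-> same_ideal (serre_lperp (image_ideal tau I)) (serre_lperp I).
Proof.
move=> I_comp I_right; split=> [tauI_I A B f | ].
  by split=> f_perp k Jk; apply: f_perp; apply/tauI_I.
apply: serre_lperp_inj => //; first exact: image_ideal_comp_closed.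
exact: image_ideal_right_finite tau_full tau_dense I_right.
Qed.

End Serre.

Theorem lemma3p10 (K : closedFieldType) (C : KCat K) (T : triangulated C)
    (S : kfunctor C) (I : ideal_of C) :
  additive_cat C -> krull_schmidt C -> serre_functor S ->
  is_ideal I -> functorially_finite I ->
  tau_stable T S I <-> same_ideal (Gh I) (CoGh (shift_ideal T I)).
Proof.
move=> _ _ [[S_ff S_dense] [eta [eta_bij eta_nat]]] [_ [_ I_comp]] I_ff.
have I_right X : right_approx I X by case: (I_ff X).
have S_full := full_fully_faithful S_ff.
rewrite (Gh_CoGh_serre_lperp eta_bij eta_nat S_dense S_full T I_comp).
exact: tau_stable_serre_lperp.
Qed.
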